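(* Let $v\in P_4$ be one of $x_1x_2^{7}x_3^{10}x_4^{12}$, $x_1^{7}x_2x_3^{10}x_4^{12}$, $x_1^{3}x_2^{3}x_3^{12}x_4^{12}$, $x_1^{3}x_2^{5}x_3^{8}x_4^{14}$, $x_1^{3}x_2^{5}x_3^{14}x_4^{8}$, $x_1^{7}x_2^{7}x_3^{8}x_4^{8}$. Then for every $1\le i\le5$ the monomial $x_i^{15}f_i(v)\in P_5$ is strictly inadmissible.
   Context: $P_k=\mathbb F_2[x_1,\dots,x_k]$, $\deg x_i=1$, modules over the mod-2 Steenrod algebra $\mathcal A$. For $1\le i\le5$, $f_i:P_4\to P_5$ is the algebra homomorphism with $f_i(x_u)=x_u$ for $u<i$ and $f_i(x_u)=x_{u+1}$ for $i\le u\le4$. $\mathcal A(s-1)$ is the sub-Hopf algebra generated by $Sq^r$, $0\le r<2^s$, with augmentation ideal $\mathcal A(s-1)^+$. For $x=x_1^{a_1}\cdots x_5^{a_5}$: weight vector $\omega_i(x)=\sum_j\alpha_{i-1}(a_j)$ ($\alpha_r(a)$ the $r$-th binary digit), exponent vector $\sigma(x)=(a_1,\dots,a_5)$, both ordered left-lexicographically; for monomials of equal degree, $x<y$ iff $\omega(x)<\omega(y)$, or $\omega(x)=\omega(y)$ and $\sigma(x)<\sigma(y)$. $P_5^-(\omega)$ is spanned by monomials $y$ of degree $\sum_i2^{i-1}\omega_i$ with $\omega(y)<\omega$. A monomial $x$ is strictly inadmissible if there are monomials $y_1,\dots,y_r<x$ with $x+\sum_jy_j\in\mathcal A(s-1)^+P_5+P_5^-(\omega(x))$,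 where $s=\max\{i:\omega_i(x)>0\}$. *)

From HB Require Import structures.
From mathcomp Require Import all_boot all_order all_algebra.
From mathcomp Require Import mpoly.
Set Implicit Arguments. Unset Strict Implicit. Unset Printing Implicit Defensive.
Import Order.TTheory GRing.Theory.
Local Open Scope ring_scope.

(* P_k = F_2[x_1,...,x_k]; variables are indexed from 0, i.e. x_{u} = 'X_(u-1). *)
Notation P k := {mpoly 'F_2[k]}.

(* Steenrod square Sq^r on a monomial x^m, via the Cartan formula and
   Sq^t(x^a) = binom(a,t) x^(a+t):
   Sq^r(x^m) = sum_{k, |k| = r} (prod_j binom(m_j,k_j)) x^(m+k). *)
Definition Sq_mon n (r : nat) (m : 'X_{1..n}) : P n :=
  \sum_(k : 'X_{1..n < r.+1} | mdeg k == r)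
     (\prod_(j < n) 'C(m j, k j))%:R *: 'X_[(m + k)%MM].

Definition Sq n (r : nat) (p : P n) : P n :=
  \sum_(m <- msupp p) p@_m *: Sq_mon r m.

Definition Sq_word n (w : seq nat) (p : P n) : P n := foldr (@Sq n) p w.

(* A(s-1)^+ P_n: A(s-1) is generated by Sq^r, 0 <= r < 2^s (Sq^0 = 1), so its
   augmentation ideal is spanned by nonempty words in the Sq^r, 0 < r < 2^s;
   A(s-1)^+ P_n is the set of finite sums of such words applied to polynomials
   (F_2 coefficients absorbed into the polynomials). *)
Definition AplusP n (s : nat) (p : P n) : Prop :=
  exists (N : nat) (ws : 'I_N -> seq nat) (qs : 'I_N -> P n),
    (forall j, ws j != [::] /\ all (fun r => (0 < r)%N && (r < 2 ^ s)%N) (ws j))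
    /\ p = \sum_(j < N) Sq_word (ws j) (qs j).

Definition alpha (r a : nat) : nat := odd (a %/ 2 ^ r).

(* weight vector, indexed from 1: omega_i(x) = sum_j alpha_{i-1}(a_j). *)
Definition omega n (m : 'X_{1..n}) (i : nat) : nat :=
  (\sum_(j < n) alpha i.-1 (m j))%N.

(* exponent vector, indexed from 1: sigma_i(x) = a_i (0 beyond n). *)
Definition sigma n (m : 'X_{1..n}) (i : nat) : nat := nth 0%N (multinom_val m) i.-1.

Definition lexlt (u v : nat -> nat) : Prop :=
  exists i, (0 < i)%N /\ (forall j, (0 < j < i)%N -> u j = v j) /\ (u i < v i)%N.

Definition seq_eq1 (u v : nat -> nat) : Prop := forall i, (0 < i)%N -> u i = v i.

Definition mon_lt n (y x : 'X_{1..n}) : Prop :=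
  mdeg y = mdeg x /\
  (lexlt (omega y) (omega x) \/
   (seq_eq1 (omega y) (omega x) /\ lexlt (sigma y) (sigma x))).

(* P_n^-(omega) for omega = omega(x): spanned by monomials y of degree
   deg x (= sum_i 2^(i-1) omega_i) with omega(y) < omega. *)
Definition Pminus n (d : nat) (w : nat -> nat) (p : P n) : Prop :=
  forall y, y \in msupp p -> mdeg y = d /\ lexlt (omega y) w.

(* s = max { i : omega_i(x) > 0 } (omega_i(x) = 0 for i > deg x + 1) *)
Definition smax n (x : 'X_{1..n}) : nat :=
  (\max_(i < (mdeg x).+2 | (0 < omega x i)%N) i)%N.

Definition strictly_inadmissible n (x : 'X_{1..n}) : Prop :=
  exists ys : seq 'X_{1..n},
    (forall y, y \in ys -> mon_lt y x) /\
    exists a b : P n,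
      AplusP (smax x) a /\ Pminus (mdeg x) (omega x) b /\
      'X_[x] + \sum_(y <- ys) 'X_[y] = a + b.

(* f_i : P_4 -> P_5 (i : 'I_5 is the paper's i minus 1): the algebra
   homomorphism sending x_u to x_u (u < i) and to x_{u+1} (u >= i);
   0-based this is the index map lift i. *)
Definition f_ (i : 'I_5) (p : P 4) : P 5 :=
  comp_mpoly [tuple ('X_(lift i j) : P 5) | j < 4] p.

Definition mono4 (e : seq nat) : P 4 := \prod_(j < 4) 'X_j ^+ nth 0%N e j.

From HB Require Import structures.
From mathcomp Require Import all_boot all_order all_algebra.
From mathcomp Require Import mpoly.
Set Implicit Arguments. Unset Strict Implicit. Unset Printing Implicit Defensive.
Import Order.TTheory GRing.Theory.
Local Open Scope ring_scope.

(* It suffices to exhibit a polynomial A = sum_k Sq^(r_k)(x^(z_k))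
   with 0 < r_k < 16 (so A lies in A(3)^+ P_5, and s(x) >= 4) whose support
   consists of x, of monomials with smaller weight vector, and of monomials
   with the same weight vector and smaller exponent vector: since the
   coefficients live in F_2, A = x + sum_j y_j + b with b in P^-(omega(x)),
   which is the required relation (strictly_inadmissible_of_witness). *)

Lemma natr_F2 (m : nat) : (m%:R : 'F_2) = (odd m)%:R.
Proof. by rewrite -(Fp_nat_mod (isT : prime 2)) modn2. Qed.

Lemma addb_F2 (b1 b2 : bool) : (b1%:R + b2%:R : 'F_2) = (b1 (+) b2)%:R.
Proof. by rewrite -natrD natr_F2 oddD !oddb. Qed.

Lemma F2_neq0 (c : 'F_2) : c != 0 -> c = 1.
Proof. by case: c => [[|[|k]] //= lt2] _; apply/val_inj. Qed.

Lemma pchar_mpoly_F2 n : (2 \in [pchar P n])%N.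
Proof. apply: (rmorph_pchar (@mpolyC n _)); exact: pchar_Fp. Qed.

Lemma mpoly_F2E n (p : P n) : p = \sum_(m <- msupp p) 'X_[m].
Proof.
rewrite {1}(mpolyE p); apply: eq_big_seq => m mp.
by rewrite (@F2_neq0 p@_m) ?scale1r // -mcoeff_msupp.
Qed.

Lemma msupp_sumX n (s : seq 'X_{1..n}) (y : 'X_{1..n}) :
  y \in msupp (\sum_(m <- s) ('X_[m] : P n)) -> y \in s.
Proof.
apply: contraLR => ys; rewrite mcoeff_msupp negbK raddf_sum /=.
by rewrite big1_seq // => m /andP[_ ms]; rewrite mcoeffX; case: eqP ys => // <-; rewrite ms.
Qed.

Section SteenrodSquares.
Variable n : nat.
Implicit Types (r : nat) (z M : 'X_{1..n}).

Lemma Sq_X r z : Sq r ('X_[z] : P n) = Sq_mon r z.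
Proof. by rewrite /Sq msuppX big_seq1 mcoeffX eqxx scale1r. Qed.

Lemma Sq_mon_coef r z M :
  (Sq_mon r z)@_M =
  if (z <= M)%MM && (mdeg (M - z) == r)
  then (\prod_(j < n) 'C(z j, M j - z j))%:R else 0.
Proof.
rewrite /Sq_mon raddf_sum /=.
under eq_bigr => k _ do rewrite mcoeffZ mcoeffX.
case: ifP => [/andP[zM /eqP dMz] | notM].
- have hk : (mdeg (M - z)%MM < r.+1)%N by rewrite dMz.
  rewrite (bigD1 (BMultinom hk)) /=; last by rewrite dMz.
  rewrite addmC submK // eqxx mulr1 [X in _ + X]big1 ?addr0.
    by under eq_bigr => j _ do rewrite mnmBE.
  move=> k /andP[_ nek]; case: eqP => [ezk|]; last by rewrite mulr0.
  by move: nek; rewrite -val_eqE /= -ezk addmC addmK eqxx.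
- rewrite big1 // => k /eqP dk; case: eqP => [ezk|]; last by rewrite mulr0.
  have zM : (z <= M)%MM by rewrite -ezk lem_addr.
  by move: notM; rewrite zM -ezk addmC addmK dk eqxx.
Qed.

Lemma AplusP_sum_Sq (T : eqType) s (ps : seq T) (deg : T -> nat) (q : T -> P n) :
  all (fun p => (0 < deg p < 2 ^ s)%N) ps ->
  AplusP s (\sum_(p <- ps) Sq (deg p) (q p)).
Proof.
move=> degs; set p_ := tnth (in_tuple ps).
exists (size ps), (fun j => [:: deg (p_ j)]), (fun j => q (p_ j)); split.
  by move=> j; rewrite /= andbT (allP degs) // mem_tnth.
by rewrite big_tnth.
Qed.

End SteenrodSquares.

Section Weights.
Variable n : nat.
Implicit Types (z : 'X_{1..n}).

(* omega_i(z) vanishes once 2^(i-1) exceeds deg z: no exponent has a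
   nonzero binary digit that high. *)
Lemma omega_eq0 z i : (mdeg z < 2 ^ i.-1)%N -> omega z i = 0%N.
Proof.
move=> small; apply: big1 => j _; rewrite /alpha divn_small //.
by apply: leq_ltn_trans small; rewrite mdegE (bigD1 j) //= leq_addr.
Qed.

(* Any index s with omega_s(z) > 0 is at most s(z) (the max defining s(z)
   ranges over indices up to deg z + 1, which covers all such s). *)
Lemma smax_ge z s : (0 < omega z s)%N -> (s <= smax z)%N.
Proof.
move=> pos; have lts : (s < (mdeg z).+2)%N.
  rewrite ltnNge; apply: contraTN pos => big; rewrite -leqNgt leqn0 omega_eq0 //.
  apply: leq_trans (ltn_expl _ (isT : 1 < 2)%N).
  by case: s big => // s; rewrite ltnS => /ltnW.
by apply: (leq_bigmax_cond (Ordinal lts) (F := fun i : 'I__ => nat_of_ord i)).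
Qed.

End Weights.

(* The criterion: x is strictly inadmissible as soon as some A in
   A(s-1)^+ P_n contains x, and the other monomials of A are split by a
   predicate [low] into monomials of smaller weight vector (these form the
   P^-(omega(x)) part) and monomials smaller than x (these are the y_j). *)
Lemma strictly_inadmissible_of_witness n (x : 'X_{1..n}) (A : P n)
    (low : pred 'X_{1..n}) :
  AplusP (smax x) A -> x \in msupp A -> ~~ low x ->
  (forall M, M \in msupp A -> M != x ->
     if low M then mdeg M = mdeg x /\ lexlt (omega M) (omega x)
     else mon_lt M x) ->
  strictly_inadmissible x.
Proof.
move=> AA xA lowx split_supp; set S := msupp A.
set b := \sum_(M <- [seq M <- S | low M]) ('X_[M] : P n).
set ys := [seq M <- S | (M != x) && ~~ low M].
have A_split : A = b + ('X_[x] + \sum_(y <- ys) 'X_[y]).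
  rewrite {1}(mpoly_F2E A) -/S (bigID low) /= -big_filter; congr (_ + _).
  rewrite -big_filter (bigD1_seq x) ?mem_filter ?lowx ?filter_uniq ?msupp_uniq //=.
  by rewrite -big_filter -filter_predI; congr (_ + _); apply: congr_big.
exists ys; split.
  move=> y; rewrite mem_filter => /andP[/andP[yx /negbTE lowy] yS].
  by have := split_supp y yS yx; rewrite lowy.
exists A, b; split=> //; split.
  move=> y /msupp_sumX; rewrite mem_filter => /andP[lowy yS].
  have yx : y != x by apply: contraTneq lowy => ->.
  by have := split_supp y yS yx; rewrite lowy.
by rewrite A_split [b + _]addrC -addrA (addrr_pchar2 (pchar_mpoly_F2 n)) addr0.
Qed.

(* Row a of Pascal's triangle modulo 2, computed by the addition rule. *)
Fixpoint pascal2 (a : nat) : seq bool :=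
  if a is a'.+1 then
    let row := pascal2 a' in
    [seq p.1 (+) p.2 | p <- zip (false :: row) (rcons row false)]
  else [:: true].

Lemma size_pascal2 a : size (pascal2 a) = a.+1.
Proof. by elim: a => //= a IH; rewrite size_map size_zip /= size_rcons IH minnn. Qed.

Lemma pascal2E a b : nth false (pascal2 a) b = odd 'C(a, b).
Proof.
elim: a b => [|a IH] b.
  by case: b => [|b] //=; rewrite nth_nil.
have [lt_b | le_b] := ltnP b a.+2; last first.
  by rewrite nth_default ?size_pascal2 // bin_small.
rewrite /= (nth_map (false, false)) ?size_zip /= ?size_rcons ?size_pascal2 ?minnn //.
rewrite nth_zip /= ?size_rcons ?size_pascal2 //.
have -> : nth false (rcons (pascal2 a) false) b = nth false (pascal2 a) b.
  rewrite nth_rcons size_pascal2; case: ltnP => // le_ab.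
  by case: eqP => _; rewrite nth_default ?size_pascal2.
case: b lt_b => [|b] _ /=; first by rewrite IH bin0.
by rewrite binS oddD !IH addbC.
Qed.

Fixpoint lexb (u v : nat -> nat) (i k : nat) : bool :=
  if k is k'.+1 then (u i < v i)%N || ((u i == v i) && lexb u v i.+1 k')
  else false.

Lemma lexbP (u v : nat -> nat) i k : lexb u v i k ->
  exists j, [/\ (i <= j)%N, forall l, (i <= l < j)%N -> u l = v l & (u j < v j)%N].
Proof.
elim: k i => [//|k IH] i /= /orP[lt_i | /andP[/eqP eq_i /IH [j [ij eq_l lt_j]]]].
  by exists i; split=> // l /andP[il li]; move: (leq_ltn_trans il li); rewrite ltnn.
exists j; split=> [|l /andP[il lj]|//]; first exact: ltnW.
by move: il; rewrite leq_eqVlt => /orP[/eqP <- // | il]; apply: eq_l; rewrite il.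
Qed.

Lemma lexb_lexlt (u v : nat -> nat) k : lexb u v 1 k -> lexlt u v.
Proof.
by case/lexbP=> j [j1 eq_l lt_j]; exists j; split=> // l /andP[l1 lj]; apply: eq_l; rewrite l1.
Qed.

Lemma lexb_irr (u : nat -> nat) i k : lexb u u i k = false.
Proof. by elim: k i => [//|k IH] i /=; rewrite ltnn eqxx IH. Qed.

Lemma eq_lexb (u u' v v' : nat -> nat) i k :
  u =1 u' -> v =1 v' -> lexb u v i k = lexb u' v' i k.
Proof. by move=> eq_u eq_v; elim: k i => [//|k IH] i /=; rewrite eq_u eq_v IH. Qed.

Fixpoint compositions (r k : nat) : seq (seq nat) :=
  if k is k'.+1 then
    flatten [seq [seq a :: c | c <- compositions (r - a) k'] | a <- iota 0 r.+1]
  else if r == 0%N then [:: [::]] else [::].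

Lemma compositions_complete k (c : seq nat) : size c = k -> c \in compositions (sumn c) k.
Proof.
elim: k c => [|k IH] [|a c] // [size_c].
change (a :: c \in flatten [seq [seq a' :: c' | c' <- compositions (sumn (a :: c) - a') k]
                          | a' <- iota 0 (sumn (a :: c)).+1]).
apply/flattenP.
exists [seq a :: c' | c' <- compositions (sumn c) k]; last by rewrite map_f ?IH.
by apply/mapP; exists a; rewrite ?addKn // mem_iota /= ltnS leq_addr.
Qed.

Section Exponents.
Variable n : nat.
Implicit Types (z M : 'X_{1..n}) (g xs : seq nat).

Definition mnm_of_seq (s : seq nat) : 'X_{1..n} :=
  Multinom (insubd (nseq_tuple n 0%N) s).

Lemma mnm_of_seqK s : size s = n -> mnm_of_seq s = s :> seq nat.
Proof. by move=> size_s; rewrite /= val_insubd size_s eqxx. Qed.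

Lemma all_iotaE (P : pred nat) : all P (iota 0 n) = [forall j : 'I_n, P j].
Proof.
apply/idP/idP => [/allP all_P | /forallP all_P].
  by apply/forallP => j; rewrite all_P // mem_iota ltn_ord.
by apply/allP => j; rewrite mem_iota add0n => lt_jn; exact: (all_P (Ordinal lt_jn)).
Qed.

Lemma sumn_iotaE (F : nat -> nat) : sumn [seq F j | j <- iota 0 n] = (\sum_(j < n) F j)%N.
Proof. by rewrite -(big_mkord xpredT F) /index_iota subn0 sumnE big_map. Qed.

Lemma odd_prod_ord (F : 'I_n -> nat) : odd (\prod_(j < n) F j) = [forall j, odd (F j)].
Proof.
have oddM_ring : {morph odd : a b / (a * b)%R >-> a && b} by exact: oddM.
by rewrite (big_morph odd oddM_ring (erefl (odd 1))) big_andE.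
Qed.

Definition sq_hitb (r : nat) (z g : seq nat) : bool :=
  [&& all (fun j => nth 0 z j <= nth 0 g j)%N (iota 0 n),
      sumn [seq nth 0 g j - nth 0 z j | j <- iota 0 n]%N == r &
      all (fun j => nth false (pascal2 (nth 0 z j)) (nth 0 g j - nth 0 z j)) (iota 0 n)].

Lemma Sq_mon_coefE r z M : (Sq_mon r z)@_M = (sq_hitb r z M)%:R.
Proof.
rewrite Sq_mon_coef /sq_hitb !all_iotaE sumn_iotaE mdegE.
have -> : (z <= M)%MM = [forall j : 'I_n, nth 0 z j <= nth 0 M j]%N.
  by apply: eq_forallb => j; rewrite -!mnm_nth.
under eq_bigr => j _ do rewrite mnmBE !(mnm_nth 0%N).
case: [forall _, _] => //=; case: eqP => //= _.
rewrite natr_F2 odd_prod_ord; congr ((nat_of_bool _)%:R); apply: eq_forallb => j.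
by rewrite pascal2E -!mnm_nth.
Qed.

Definition cert_poly (cert : seq (nat * seq nat)) : P n :=
  \sum_(p <- cert) Sq p.1 'X_[mnm_of_seq p.2].

Definition cert_coefb (cert : seq (nat * seq nat)) g : bool :=
  foldr (fun p acc => sq_hitb p.1 p.2 g (+) acc) false cert.

Lemma cert_poly_coef cert M :
  all (fun p => size p.2 == n) cert -> (cert_poly cert)@_M = (cert_coefb cert M)%:R.
Proof.
rewrite /cert_poly; elim: cert => [|p cert IH]; first by rewrite big_nil mcoeff0.
case/andP=> /eqP size_p sizes; rewrite big_cons mcoeffD IH // Sq_X Sq_mon_coefE.
by rewrite mnm_of_seqK // addb_F2.
Qed.

Definition weight g (i : nat) : nat :=
  sumn [seq alpha i.-1 (nth 0 g j) | j <- iota 0 n].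

Lemma omega_weight M : omega M =1 weight M.
Proof. by move=> i; rewrite /weight sumn_iotaE; apply: eq_bigr => j _; rewrite -mnm_nth. Qed.

Lemma mdeg_sumn M : mdeg M = sumn M.
Proof. by rewrite /mdeg sumnE. Qed.

(* Exponent lists that can occur in the certificate polynomial: z + k for a
   pair (r, z) of the certificate and a composition k of r. *)
Definition cands (cert : seq (nat * seq nat)) : seq (seq nat) :=
  flatten [seq [seq [seq nth 0 p.2 j + nth 0 k j | j <- iota 0 n]%N
               | k <- compositions p.1 n] | p <- cert].

Lemma cert_coefb_exists cert g :
  cert_coefb cert g -> exists2 p, p \in cert & sq_hitb p.1 p.2 g.
Proof.
elim: cert => [//|p cert IH] /=; case hit: (sq_hitb _ _ _) => /=.
  by exists p; rewrite ?mem_head.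
case/IH=> q qc hq.
by exists q; rewrite // in_cons qc orbT.
Qed.

Lemma cands_complete cert M : cert_coefb cert M -> (M : seq nat) \in cands cert.
Proof.
case/cert_coefb_exists=> p pc /and3P[/allP le_zM /eqP deg_p _].
apply/flattenP; exists [seq [seq nth 0 p.2 j + nth 0 k j | j <- iota 0 n]%N
                       | k <- compositions p.1 n]; first by apply/mapP; exists p.
apply/mapP; exists [seq nth 0 M j - nth 0 p.2 j | j <- iota 0 n]%N.
  by rewrite -deg_p compositions_complete ?size_map ?size_iota.
apply: (@eq_from_nth _ 0%N) => [|j]; first by rewrite size_tuple size_map size_iota.
rewrite size_tuple => lt_jn; rewrite (nth_map 0%N) ?size_iota // nth_iota //.
by rewrite (nth_map 0%N) ?size_iota // nth_iota // add0n subnKC // le_zM // mem_iota.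
Qed.

Definition below (w : nat) g xs : bool :=
  lexb (weight g) (weight xs) 1 w
  || all (fun i => weight g i == weight xs i) (iota 1 w)
     && lexb (fun i => nth 0 g i.-1) (fun i => nth 0 xs i.-1) 1 n.

(* cert certifies xs: its squares Sq^r have 0 < r < 2^s with omega_s(x) > 0
   (so they lie in A(s(x)-1)), deg x < 2^w (so weight vectors vanish beyond
   index w), x^xs occurs in the certificate polynomial, and every other
   candidate in its support has the same degree and is below xs. *)
Definition certifies (s w : nat) (cert : seq (nat * seq nat)) xs : bool :=
  [&& size xs == n, all (fun p => size p.2 == n) cert,
      all (fun p => 0 < p.1 < 2 ^ s)%N cert, 0 < weight xs s,
      sumn xs < 2 ^ w, cert_coefb cert xs &
      all (fun g => cert_coefb cert g ==>
                      (g == xs) || (sumn g == sumn xs) && below w g xs)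
          (cands cert)]%N.

Theorem certifies_inadmissible s w cert xs :
  certifies s w cert xs -> strictly_inadmissible (mnm_of_seq xs).
Proof.
case/and5P=> /eqP size_xs sizes degs wt_s /and3P[deg_w hit_xs cands_ok].
set x := mnm_of_seq xs; have xE : x = xs :> seq nat by exact: mnm_of_seqK.
have coefE M : (cert_poly cert)@_M = (cert_coefb cert M)%:R by exact: cert_poly_coef.
apply: (@strictly_inadmissible_of_witness _ _ (cert_poly cert)
          (fun M => lexb (weight M) (weight xs) 1 w)).
- apply: AplusP_sum_Sq; apply: sub_all degs => p /andP[-> /leq_trans]; apply.
  by rewrite leq_exp2l // smax_ge // omega_weight xE.
- by rewrite mcoeff_msupp coefE xE hit_xs oner_neq0.
- by rewrite /= xE lexb_irr.
move=> M; rewrite mcoeff_msupp coefE; case hit: (cert_coefb _ _) => // _ Mx.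
have := implyP (allP cands_ok _ (cands_complete hit)) hit.
case/orP=> [/eqP Mxs | /andP[/eqP deg_M]].
  by case/eqP: Mx; apply/val_inj/val_inj; rewrite /= Mxs xE.
have deg_eq : mdeg M = mdeg x by rewrite !mdeg_sumn deg_M xE.
rewrite /below; case: ifP => [low_M _ | _ /= /andP[/allP same_wt lex_exp]].
  split=> //; apply: (@lexb_lexlt _ _ w).
  by rewrite (eq_lexb _ _ (omega_weight M) (omega_weight x)) xE.
split=> //; right; split; last by rewrite /sigma xE; exact: lexb_lexlt lex_exp.
move=> i i_gt0; have [le_iw | lt_wi] := leqP i w.
  by rewrite !omega_weight xE; apply/eqP/same_wt; rewrite mem_iota i_gt0 add1n ltnS.
have small_x : (mdeg x < 2 ^ i.-1)%N.
  by rewrite mdeg_sumn xE (leq_trans deg_w) // leq_exp2l // -ltnS prednK.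
by rewrite !omega_eq0 ?deg_eq.
Qed.
End Exponents.

Definition insert_at (i a : nat) (e : seq nat) : seq nat := take i e ++ a :: drop i e.

Lemma insert_at_mono (i : 'I_5) a e : size e = 4%N ->
  'X_[mnm_of_seq 5 (insert_at i a e)] = 'X_i ^+ a * f_ i (mono4 e).
Proof.
move=> size_e; have le_ie : (i <= size e)%N by rewrite size_e -ltnS ltn_ord.
have size_ins : size (insert_at i a e) = 5%N.
  by rewrite size_cat /= size_take size_drop size_e; case: i le_ie => [[|[|[|[|[|]]]]] ?].
have nth_ins j : (mnm_of_seq 5 (insert_at i a e)) j = nth 0 (insert_at i a e) j.
  by rewrite (mnm_nth 0%N) mnm_of_seqK.
rewrite mpolyXE_id (bigD1_ord i) //= nth_ins nth_cat size_take_min (minn_idPl le_ie).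
rewrite ltnn subnn /=; congr (_ * _); rewrite /f_ /mono4 rmorph_prod.
apply: eq_bigr => j _; rewrite rmorphXn; congr (_ ^+ _).
  have Xj := comp_mpolyXU j [tuple ('X_(lift i j') : P 5) | j' < 4].
  by rewrite -tnth_nth tnth_mktuple in Xj.
rewrite nth_ins nth_cat size_take_min (minn_idPl le_ie) /= /bump; case: (leqP i j) => ij.
  by rewrite add1n ltnNge ltnW //= subSn //= nth_drop subnKC.
by rewrite add0n ij nth_take.
Qed.

(* For each exponent list xs of a monomial x_i^15 f_i(v), a certificate: pairs
   (r, z) such that the sum of the Sq^r(x^z) is x^xs plus lower terms. *)
Definition certificates : seq (seq nat * seq (nat * seq nat)) := [::
  ([:: 15; 1; 7; 10; 12], [:: (1, [:: 15; 1; 7; 10; 11]); (1, [:: 15; 1; 7; 9; 12]); (2, [:: 15; 1; 7; 9; 11]); (1, [:: 15; 2; 7; 7; 13]); (2, [:: 15; 1; 7; 7; 13]); (2, [:: 17; 1; 7; 7; 11]); (1, [:: 15; 1; 10; 7; 11]); (1, [:: 15; 1; 9; 7; 12]); (2, [:: 15; 1; 9; 7; 11]); (4, [:: 15; 1; 6; 7; 12]); (2, [:: 15; 1; 6; 7; 14]); (1, [:: 18; 1; 7; 7; 11])]);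
  ([:: 1; 15; 7; 10; 12], [:: (1, [:: 1; 15; 7; 10; 11]); (1, [:: 1; 15; 7; 9; 12]); (2, [:: 1; 15; 7; 9; 11]); (1, [:: 2; 15; 7; 7; 13]); (2, [:: 1; 15; 7; 7; 13]); (1, [:: 2; 15; 9; 7; 11]); (2, [:: 1; 15; 9; 7; 11]); (2, [:: 1; 17; 7; 7; 11]); (2, [:: 1; 15; 6; 7; 14]); (1, [:: 2; 17; 7; 7; 11]); (4, [:: 1; 15; 6; 7; 12])]);
  ([:: 1; 7; 15; 10; 12], [:: (1, [:: 1; 7; 15; 10; 11]); (1, [:: 1; 7; 15; 9; 12]); (2, [:: 1; 7; 15; 9; 11]); (2, [:: 1; 7; 17; 7; 11]); (2, [:: 1; 7; 15; 7; 13]); (2, [:: 1; 9; 15; 7; 11]); (1, [:: 2; 7; 15; 7; 13]); (1, [:: 2; 7; 17; 7; 11]); (1, [:: 1; 10; 15; 7; 11]); (1, [:: 1; 9; 15; 7; 12]); (4, [:: 1; 6; 15; 7; 12]); (2, [:: 1; 6; 15; 7; 14])]);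
  ([:: 1; 7; 10; 15; 12], [:: (1, [:: 1; 7; 10; 15; 11]); (1, [:: 1; 7; 9; 15; 12]); (2, [:: 1; 7; 9; 15; 11]); (2, [:: 1; 7; 7; 17; 11]); (2, [:: 1; 7; 7; 15; 13]); (1, [:: 2; 7; 7; 17; 11]); (2, [:: 1; 9; 7; 15; 11]); (1, [:: 2; 7; 7; 15; 13]); (1, [:: 1; 10; 7; 15; 11]); (1, [:: 1; 9; 7; 15; 12]); (4, [:: 1; 6; 7; 15; 12]); (2, [:: 1; 6; 7; 15; 14])]);
  ([:: 1; 7; 10; 12; 15], [:: (1, [:: 1; 7; 10; 11; 15]); (1, [:: 1; 7; 9; 12; 15]); (2, [:: 1; 7; 9; 11; 15]); (2, [:: 1; 9; 7; 11; 15]); (2, [:: 1; 7; 7; 13; 15]); (1, [:: 2; 9; 7; 11; 15]); (2, [:: 1; 7; 7; 11; 17]); (1, [:: 2; 7; 7; 13; 15]); (1, [:: 2; 7; 7; 11; 17]); (4, [:: 1; 6; 7; 12; 15]); (2, [:: 1; 6; 7; 14; 15])]);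
  ([:: 15; 7; 1; 10; 12], [:: (1, [:: 15; 7; 1; 10; 11]); (1, [:: 15; 7; 1; 9; 12]); (2, [:: 15; 7; 1; 9; 11]); (1, [:: 18; 7; 1; 7; 11]); (2, [:: 17; 7; 1; 7; 11]); (1, [:: 15; 7; 1; 8; 13]); (2, [:: 15; 7; 1; 7; 13]); (1, [:: 15; 7; 1; 7; 14]); (4, [:: 15; 4; 2; 7; 13]); (2, [:: 15; 9; 1; 7; 11]); (1, [:: 15; 9; 2; 7; 11]); (1, [:: 15; 9; 1; 7; 12]); (4, [:: 15; 5; 2; 7; 12])]);
  ([:: 7; 15; 1; 10; 12], [:: (1, [:: 7; 15; 1; 10; 11]); (1, [:: 7; 15; 1; 9; 12]); (2, [:: 7; 15; 1; 9; 11]); (1, [:: 7; 15; 2; 7; 13]); (2, [:: 7; 15; 1; 7; 13]); (1, [:: 8; 15; 1; 7; 13]); (4, [:: 4; 15; 2; 7; 13]); (1, [:: 7; 18; 1; 7; 11]); (2, [:: 7; 17; 1; 7; 11]); (1, [:: 10; 15; 1; 7; 11]); (1, [:: 9; 15; 1; 7; 12]); (2, [:: 9; 15; 1; 7; 11]); (4, [:: 6; 15; 1; 7; 12])]);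
  ([:: 7; 1; 15; 10; 12], [:: (2, [:: 7; 1; 15; 10; 10]); (2, [:: 7; 1; 15; 9; 11]); (4, [:: 7; 1; 15; 7; 11]); (1, [:: 7; 2; 15; 7; 13]); (2, [:: 7; 1; 15; 13; 7]); (4, [:: 7; 1; 15; 11; 7]); (1, [:: 11; 1; 15; 7; 10]); (4, [:: 11; 1; 15; 7; 7]); (4, [:: 7; 1; 19; 7; 7]); (2, [:: 13; 1; 15; 7; 7]); (2, [:: 6; 1; 15; 7; 14]); (4, [:: 7; 1; 15; 9; 9]); (1, [:: 9; 2; 15; 7; 11]); (2, [:: 9; 1; 15; 7; 11]); (4, [:: 10; 2; 15; 7; 7]); (2, [:: 12; 2; 15; 7; 7]); (2, [:: 10; 2; 15; 7; 9]); (2, [:: 7; 1; 17; 7; 11]); (4, [:: 9; 1; 15; 9; 7]); (2, [:: 7; 1; 21; 7; 7]); (4, [:: 9; 1; 15; 7; 9]); (1, [:: 7; 2; 15; 11; 9]); (1, [:: 11; 1; 15; 10; 7]); (1, [:: 11; 2; 17; 7; 7]); (1, [:: 10; 1; 15; 11; 7]); (1, [:: 9; 2; 15; 11; 7]); (4, [:: 7; 1; 17; 7; 9]); (1, [:: 7; 2; 19; 9; 7]); (2, [:: 10; 2; 15; 9; 7]); (4, [:: 7; 1; 17; 9; 7]); (4, [:: 9; 1; 17; 7; 7]); (4, [:: 5; 2; 15; 7; 12]); (1, [:: 7; 2; 19; 7; 9]); (1, [:: 7; 2; 17; 11; 7])]);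
  ([:: 7; 1; 10; 15; 12], [:: (2, [:: 7; 1; 10; 15; 10]); (2, [:: 7; 1; 9; 15; 11]); (4, [:: 7; 1; 7; 15; 11]); (2, [:: 7; 1; 13; 15; 7]); (4, [:: 7; 1; 11; 15; 7]); (2, [:: 9; 1; 7; 19; 7]); (2, [:: 7; 1; 7; 19; 9]); (4, [:: 9; 1; 7; 15; 9]); (4, [:: 7; 1; 7; 19; 7]); (1, [:: 10; 1; 7; 15; 11]); (1, [:: 9; 2; 7; 15; 11]); (2, [:: 9; 1; 7; 15; 11]); (1, [:: 7; 2; 7; 15; 13]); (4, [:: 11; 1; 7; 15; 7]); (2, [:: 7; 1; 7; 17; 11]); (4, [:: 9; 1; 7; 17; 7]); (4, [:: 7; 1; 9; 17; 7]); (1, [:: 7; 2; 11; 15; 9]); (1, [:: 9; 2; 11; 15; 7]); (1, [:: 12; 1; 7; 15; 9]); (1, [:: 11; 1; 7; 15; 10]); (2, [:: 10; 1; 7; 15; 10]); (2, [:: 13; 1; 7; 15; 7]); (1, [:: 11; 2; 7; 17; 7]); (1, [:: 12; 1; 9; 15; 7]); (1, [:: 11; 1; 10; 15; 7]); (2, [:: 10; 1; 10; 15; 7]); (2, [:: 7; 1; 9; 19; 7]); (1, [:: 7; 2; 11; 17; 7]); (4, [:: 7; 1; 9; 15; 9]); (2, [:: 6; 1; 7; 15; 14]); (4, [:: 9; 1; 9; 15; 7]); (4, [:: 7; 1; 7; 17; 9]); (4, [:: 5; 2; 7; 15; 12]); (1, [:: 7; 2; 7; 21; 7])]);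
  ([:: 7; 1; 10; 12; 15], [:: (1, [:: 7; 1; 10; 11; 15]); (1, [:: 7; 1; 9; 12; 15]); (2, [:: 7; 1; 9; 11; 15]); (1, [:: 7; 2; 7; 13; 15]); (2, [:: 7; 1; 7; 13; 15]); (2, [:: 7; 1; 7; 11; 17]); (1, [:: 9; 2; 7; 11; 15]); (1, [:: 9; 1; 7; 12; 15]); (2, [:: 9; 1; 7; 11; 15]); (4, [:: 5; 2; 7; 12; 15]); (2, [:: 6; 1; 7; 14; 15]); (1, [:: 7; 2; 7; 11; 17])]);
  ([:: 15; 3; 3; 12; 12], [:: (1, [:: 15; 3; 3; 11; 12]); (4, [:: 15; 3; 4; 7; 12]); (2, [:: 15; 2; 3; 11; 12]); (1, [:: 15; 3; 8; 7; 11]); (2, [:: 15; 2; 8; 7; 11])]);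
  ([:: 3; 15; 3; 12; 12], [:: (1, [:: 3; 15; 3; 12; 11]); (4, [:: 3; 15; 4; 12; 7]); (2, [:: 2; 15; 3; 12; 11]); (1, [:: 3; 15; 8; 11; 7]); (2, [:: 2; 15; 8; 11; 7])]);
  ([:: 3; 3; 15; 12; 12], [:: (1, [:: 3; 3; 15; 12; 11]); (1, [:: 4; 3; 15; 11; 11]); (2, [:: 2; 3; 15; 11; 12]); (2, [:: 2; 3; 15; 12; 11]); (4, [:: 4; 3; 15; 12; 7]); (4, [:: 4; 4; 15; 11; 7]); (4, [:: 3; 4; 15; 12; 7]); (1, [:: 8; 3; 15; 11; 7]); (1, [:: 3; 8; 15; 11; 7])]);
  ([:: 3; 3; 12; 15; 12], [:: (1, [:: 3; 3; 12; 15; 11]); (4, [:: 3; 4; 12; 15; 7]); (2, [:: 2; 3; 12; 15; 11]); (1, [:: 3; 8; 11; 15; 7]); (2, [:: 2; 8; 11; 15; 7])]);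
  ([:: 3; 3; 12; 12; 15], [:: (1, [:: 3; 3; 12; 11; 15]); (1, [:: 3; 4; 11; 11; 15]); (2, [:: 2; 3; 11; 12; 15]); (4, [:: 4; 3; 7; 12; 15]); (4, [:: 3; 4; 7; 12; 15]); (2, [:: 2; 3; 12; 11; 15]); (4, [:: 4; 4; 7; 11; 15]); (1, [:: 8; 3; 7; 11; 15]); (1, [:: 3; 8; 7; 11; 15])]);
  ([:: 15; 3; 5; 8; 14], [:: (2, [:: 15; 3; 5; 6; 14]); (2, [:: 15; 3; 3; 8; 14]); (4, [:: 15; 3; 3; 6; 14]); (1, [:: 15; 3; 3; 10; 13]); (2, [:: 15; 2; 3; 10; 13]); (1, [:: 15; 3; 3; 6; 17]); (1, [:: 19; 3; 3; 6; 13])]);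
  ([:: 3; 15; 5; 8; 14], [:: (1, [:: 3; 15; 5; 8; 13]); (1, [:: 3; 15; 5; 7; 14]); (2, [:: 3; 15; 5; 7; 13]); (2, [:: 3; 15; 5; 6; 14]); (4, [:: 3; 15; 3; 6; 14]); (1, [:: 6; 15; 3; 7; 13]); (2, [:: 5; 15; 3; 7; 13]); (2, [:: 3; 17; 3; 7; 13]); (2, [:: 2; 15; 6; 7; 13]); (1, [:: 3; 15; 3; 6; 17]); (2, [:: 3; 15; 4; 7; 14]); (1, [:: 3; 18; 3; 7; 13]); (2, [:: 3; 15; 3; 9; 13]); (1, [:: 4; 15; 3; 9; 13]); (1, [:: 3; 19; 3; 6; 13])]);
  ([:: 3; 5; 15; 8; 14], [:: (2, [:: 3; 5; 15; 6; 14]); (2, [:: 3; 3; 15; 8; 14]); (4, [:: 3; 3; 15; 6; 14]); (1, [:: 3; 3; 19; 6; 13]); (2, [:: 4; 3; 15; 7; 14]); (2, [:: 2; 5; 15; 7; 14]); (1, [:: 3; 3; 15; 9; 14]); (1, [:: 3; 3; 15; 6; 17])]);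
  ([:: 3; 5; 8; 15; 14], [:: (2, [:: 3; 5; 6; 15; 14]); (2, [:: 3; 3; 8; 15; 14]); (4, [:: 3; 3; 6; 15; 14]); (1, [:: 3; 3; 10; 15; 13]); (2, [:: 2; 3; 10; 15; 13]); (1, [:: 3; 3; 6; 15; 17]); (1, [:: 3; 3; 6; 19; 13])]);
  ([:: 3; 5; 8; 14; 15], [:: (2, [:: 3; 5; 6; 14; 15]); (2, [:: 3; 3; 8; 14; 15]); (4, [:: 3; 3; 6; 14; 15]); (1, [:: 3; 3; 10; 13; 15]); (2, [:: 2; 3; 10; 13; 15]); (1, [:: 3; 3; 6; 13; 19]); (1, [:: 3; 3; 6; 17; 15])]);
  ([:: 15; 3; 5; 14; 8], [:: (2, [:: 15; 3; 5; 14; 6]); (2, [:: 15; 3; 3; 14; 8]); (4, [:: 15; 3; 3; 14; 6]); (1, [:: 15; 3; 3; 18; 5]); (2, [:: 15; 4; 3; 14; 7]); (2, [:: 15; 2; 5; 14; 7]); (1, [:: 15; 3; 3; 14; 9]); (1, [:: 19; 3; 3; 14; 5])]);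
  ([:: 3; 15; 5; 14; 8], [:: (2, [:: 3; 15; 5; 14; 6]); (2, [:: 3; 15; 3; 14; 8]); (4, [:: 3; 15; 3; 14; 6]); (1, [:: 3; 15; 3; 13; 10]); (2, [:: 2; 15; 3; 13; 10]); (1, [:: 3; 15; 3; 18; 5]); (1, [:: 3; 19; 3; 14; 5])]);
  ([:: 3; 5; 15; 14; 8], [:: (1, [:: 3; 5; 15; 14; 7]); (1, [:: 3; 5; 15; 13; 8]); (2, [:: 3; 5; 15; 14; 6]); (2, [:: 3; 5; 15; 13; 7]); (4, [:: 3; 3; 15; 14; 6]); (2, [:: 3; 3; 17; 13; 7]); (2, [:: 3; 3; 15; 13; 9]); (1, [:: 6; 3; 15; 13; 7]); (2, [:: 5; 3; 15; 13; 7]); (1, [:: 3; 3; 18; 13; 7]); (1, [:: 3; 3; 15; 14; 9]); (1, [:: 3; 3; 15; 13; 10]); (2, [:: 3; 4; 15; 14; 7]); (2, [:: 2; 6; 15; 13; 7]); (1, [:: 3; 3; 19; 14; 5]); (1, [:: 3; 3; 15; 18; 5])]);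
  ([:: 3; 5; 14; 15; 8], [:: (2, [:: 3; 5; 14; 15; 6]); (2, [:: 3; 3; 14; 15; 8]); (4, [:: 3; 3; 14; 15; 6]); (1, [:: 3; 3; 14; 15; 9]); (2, [:: 2; 3; 14; 15; 9]); (1, [:: 3; 3; 14; 19; 5]); (1, [:: 3; 3; 18; 15; 5])]);
  ([:: 3; 5; 14; 8; 15], [:: (2, [:: 3; 5; 14; 6; 15]); (2, [:: 3; 3; 14; 8; 15]); (4, [:: 3; 3; 14; 6; 15]); (1, [:: 3; 3; 14; 9; 15]); (2, [:: 2; 3; 14; 9; 15]); (1, [:: 3; 3; 14; 5; 19]); (1, [:: 3; 3; 18; 5; 15])]);
  ([:: 15; 7; 7; 8; 8], [:: (1, [:: 15; 7; 7; 8; 7]); (1, [:: 15; 7; 8; 7; 7]); (2, [:: 15; 7; 6; 7; 8]); (2, [:: 15; 6; 8; 7; 7]); (2, [:: 15; 6; 7; 8; 7]); (4, [:: 15; 5; 6; 7; 8])]);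
  ([:: 7; 15; 7; 8; 8], [:: (1, [:: 7; 15; 7; 8; 7]); (2, [:: 7; 15; 6; 8; 7]); (2, [:: 6; 15; 7; 8; 7]); (4, [:: 5; 15; 6; 8; 7])]);
  ([:: 7; 7; 15; 8; 8], [:: (1, [:: 7; 7; 15; 7; 8]); (1, [:: 8; 7; 15; 7; 7]); (2, [:: 6; 8; 15; 7; 7]); (2, [:: 6; 7; 15; 8; 7]); (2, [:: 7; 6; 15; 7; 8]); (1, [:: 9; 5; 15; 7; 8]); (4, [:: 6; 5; 15; 7; 8])]);
  ([:: 7; 7; 8; 15; 8], [:: (2, [:: 7; 7; 8; 15; 6]); (4, [:: 7; 7; 4; 15; 8]); (8, [:: 7; 7; 4; 15; 4]); (2, [:: 9; 7; 6; 15; 6]); (4, [:: 5; 9; 6; 15; 6]); (1, [:: 7; 9; 8; 15; 5]); (1, [:: 7; 7; 4; 23; 3]); (1, [:: 11; 7; 3; 15; 8]); (4, [:: 11; 7; 4; 15; 4]); (1, [:: 9; 7; 5; 15; 8]); (1, [:: 7; 11; 8; 15; 3]); (2, [:: 7; 10; 8; 15; 3]); (2, [:: 12; 7; 3; 15; 6]); (2, [:: 10; 9; 3; 15; 6]); (2, [:: 10; 7; 5; 15; 6])]);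
  ([:: 7; 7; 8; 8; 15], [:: (4, [:: 7; 7; 8; 4; 15]); (4, [:: 7; 7; 4; 8; 15]); (8, [:: 7; 7; 4; 4; 15]); (4, [:: 11; 7; 4; 4; 15]); (2, [:: 11; 7; 4; 6; 15]); (1, [:: 7; 7; 4; 3; 23]); (2, [:: 11; 7; 6; 4; 15]); (2, [:: 10; 9; 3; 6; 15]); (4, [:: 6; 9; 5; 6; 15]); (1, [:: 11; 7; 3; 6; 17]); (2, [:: 11; 7; 3; 5; 17]); (1, [:: 11; 7; 6; 3; 17]); (2, [:: 11; 7; 5; 3; 17]); (1, [:: 11; 10; 3; 5; 15]); (2, [:: 11; 9; 3; 5; 15]); (1, [:: 13; 7; 4; 5; 15]); (1, [:: 13; 7; 3; 6; 15]); (2, [:: 13; 7; 3; 5; 15]); (1, [:: 12; 9; 5; 3; 15]); (1, [:: 11; 9; 6; 3; 15]); (2, [:: 11; 9; 5; 3; 15]); (4, [:: 12; 5; 6; 3; 15]); (2, [:: 14; 8; 3; 3; 15]); (1, [:: 11; 9; 5; 4; 15]); (2, [:: 10; 6; 9; 3; 15]); (4, [:: 6; 6; 9; 5; 15]); (1, [:: 12; 5; 9; 3; 15]); (1, [:: 14; 7; 5; 3; 15]); (2, [:: 13; 7; 5; 3; 15]); (1, [:: 13; 8; 5; 3; 15])])]%N.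

Definition certificate (xs : seq nat) : seq (nat * seq nat) :=
  foldr (fun p acc => if p.1 == xs then p.2 else acc) [::] certificates.

Definition lemma4_exponents : seq (seq nat) :=
  [:: [:: 1; 7; 10; 12]; [:: 7; 1; 10; 12]; [:: 3; 3; 12; 12];
      [:: 3; 5; 8; 14]; [:: 3; 5; 14; 8]; [:: 7; 7; 8; 8]]%N.

(* All thirty certificates are valid, with s = 4 (so that the squares used
   lie in A(3)) and the weight vectors compared on their first 6 entries. *)
Lemma lemma4_certified :
  all (fun e => (size e == 4) &&
         all (fun i => certifies 5 4 6 (certificate (insert_at i 15 e)) (insert_at i 15 e))
             (iota 0 5))%N
      lemma4_exponents.
Proof. by vm_compute. Qed.

Theorem lemma4 :
  forall e : seq nat,
    e \in [:: [:: 1; 7; 10; 12]; [:: 7; 1; 10; 12]; [:: 3; 3; 12; 12];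
              [:: 3; 5; 8; 14]; [:: 3; 5; 14; 8]; [:: 7; 7; 8; 8]]%N ->
  forall i : 'I_5,
    exists x : 'X_{1..5},
      'X_[x] = 'X_i ^+ 15 * f_ i (mono4 e) /\ strictly_inadmissible x.
Proof.
move=> e e_in i; have /andP[/eqP size_e certified_e] := allP lemma4_certified e e_in.
exists (mnm_of_seq 5 (insert_at i 15 e)); split; first exact: insert_at_mono.
by apply: certifies_inadmissible (allP certified_e i _); rewrite mem_iota ltn_ord.
Qed.
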